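(* Let $A$ be a set of vertices in a Johnson graph $J(m,k)$ that is shattered by the edge relation, and assume $|A|\ge 4$. Then there do not exist three vertices in $A$ that are pairwise at distance $2$ from each other.
   Context: For $m\ge k$ and a set $X$ with $|X|=m$, the Johnson graph $J(m,k)$ has as vertices the $k$-element subsets of $X$, two vertices adjacent iff their symmetric difference has size $2$. $N(v)$ is the set of vertices adjacent to $v$ and $d$ is graph distance. A set $A$ of vertices of a graph $G$ is shattered by the edge relation if $\{A\cap N(w)\mid w\in V(G)\}$ is the full power set of $A$. *)

From mathcomp Require Import all_boot.
Set Implicit Arguments. Unset Strict Implicit. Unset Printing Implicit Defensive.

Definition jvert (m k : nat) := {S : {set 'I_m} | #|S| == k}.

Definition jadj (m k : nat) (u v : jvert m k) : bool :=
  #|(val u :\: val v) :|: (val v :\: val u)| == 2.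

Definition jnbhd (m k : nat) (v : jvert m k) : {set jvert m k} :=
  [set w | jadj v w].

Definition jwalk (m k : nat) (n : nat) (u v : jvert m k) : Prop :=
  exists s : seq (jvert m k), [/\ size s = n, path (@jadj m k) u s & last u s = v].

Definition jdist_eq (m k : nat) (u v : jvert m k) (n : nat) : Prop :=
  jwalk n u v /\ forall n', n' < n -> ~ jwalk n' u v.

Definition shattered (m k : nat) (A : {set jvert m k}) : Prop :=
  forall B : {set jvert m k}, B \subset A ->
    exists w : jvert m k, A :&: jnbhd w = B.

From mathcomp Require Import all_boot.
From mathcomp Require Import zify.

(* Among k-sets, call w a neighbour of x when |w \ x| = 1. If x, y, z are
   pairwise at distance 2 and w is a neighbour of all three, then a point of w
   missing from two of them would leave w \ {t} inside an intersection of size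
   k - 2, and a point of two of them missing from w would put k + 1 points of
   their union inside w. Hence w is the majority set of x, y, z, so three such
   vertices have at most one common neighbour. In a shattered set containing
   x, y, z and a fourth vertex a, both {x, y, z} and {x, y, z, a} are traces of
   neighbourhoods of common neighbours of x, y, z; these must coincide, which is
   absurd since only one trace contains a. *)

Section SetDifferences.
Context {T : finType}.
Implicit Types A B C x y z w : {set T}.

Lemma cardsD_sym A B : #|A| = #|B| -> #|A :\: B| = #|B :\: A|.
Proof. by rewrite !cardsD setIC => ->. Qed.

Lemma cardsD_triangle A B C : #|A :\: C| <= #|A :\: B| + #|B :\: C|.
Proof.
apply: leq_trans (leq_of_leqif (leq_card_setU _ _)); apply: subset_leq_card.
by apply/subsetP => t; rewrite !inE; case: (t \in A); case: (t \in B); case: (t \in C).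
Qed.

Lemma setD1_subset_cardsD1 A B t :
  #|A :\: B| = 1 -> t \in A -> t \notin B -> A :\ t \subset B.
Proof.
move=> /eqP/cards1P [u AB] tA tB.
have /set1P tu : t \in [set u] by rewrite -AB inE tB tA.
apply/subsetP => s; rewrite !inE => /andP [st sA]; apply: contraR st => sB.
have /set1P -> : s \in [set u] by rewrite -AB inE sB sA.
by rewrite tu.
Qed.

Lemma setI_subset_cardsD1 x y w :
  #|x| = #|w| -> #|y| = #|w| -> #|x :\: y| = 2 ->
  #|w :\: x| = 1 -> #|w :\: y| = 1 -> x :&: y \subset w.
Proof.
move=> xw yw xy wx wy; apply/subsetP => t /setIP [tx ty]; apply: contraT => tw.
have : (x :|: y) :\ t \subset w.
  by rewrite setDUl subUset !setD1_subset_cardsD1 // cardsD_sym.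
move/subset_leq_card; have := cardsD1 t (x :|: y); rewrite inE tx.
have yx : #|y :\: x| = 2 by rewrite -cardsD_sym // xw yw.
have := cardsID x y; rewrite setIC yx; have := cardsUI x y; lia.
Qed.

Lemma subset_setU_cardsD1 x y w :
  #|x| = #|w| -> #|x :\: y| = 2 ->
  #|w :\: x| = 1 -> #|w :\: y| = 1 -> w \subset x :|: y.
Proof.
move=> xw xy wx wy; apply/subsetP => t tw; rewrite inE.
apply: contraT; rewrite negb_or => /andP [tx ty].
have : w :\ t \subset x :&: y by rewrite subsetI !setD1_subset_cardsD1.
move/subset_leq_card; have := cardsD1 t w; rewrite tw.
have := cardsID y x; lia.
Qed.

Definition majority x y z := (x :&: y) :|: (y :&: z) :|: (z :&: x).

Lemma majorityE x y z :
  majority x y z = (x :|: y) :&: (y :|: z) :&: (z :|: x).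
Proof.
apply/setP => t; rewrite !inE.
by case: (t \in x); case: (t \in y); case: (t \in z).
Qed.

Lemma common_neighbour_majority x y z w :
  #|x| = #|w| -> #|y| = #|w| -> #|z| = #|w| ->
  #|x :\: y| = 2 -> #|y :\: z| = 2 -> #|x :\: z| = 2 ->
  #|w :\: x| = 1 -> #|w :\: y| = 1 -> #|w :\: z| = 1 ->
  w = majority x y z.
Proof.
move=> xw yw zw xy yz xz wx wy wz.
have zx : #|z :\: x| = 2 by rewrite cardsD_sym // xw zw.
apply/eqP; rewrite eqEsubset; apply/andP; split.
- by rewrite majorityE !subsetI !subset_setU_cardsD1.
- by rewrite !subUset !setI_subset_cardsD1.
Qed.

End SetDifferences.

Section JohnsonGraph.
Context {m k : nat}.
Implicit Types u v w x y z : jvert m k.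

Lemma jcard u : #|val u| = k.
Proof. exact: eqP (valP u). Qed.

Lemma jcardsD_sym u v : #|val u :\: val v| = #|val v :\: val u|.
Proof. by rewrite cardsD_sym // !jcard. Qed.

Lemma jadjE u v : jadj u v = (#|val u :\: val v| == 1).
Proof.
have disjD : (val u :\: val v) :&: (val v :\: val u) = set0.
  by apply/setP => t; rewrite !inE; case: (t \in val u); case: (t \in val v).
by rewrite /jadj cardsU disjD cards0 -jcardsD_sym; apply/eqP/eqP; lia.
Qed.

Lemma jvert_eq_cardsD0 u v : #|val u :\: val v| = 0 -> u = v.
Proof.
move=> /eqP; rewrite cards_eq0 setD_eq0 => uv.
by apply: val_inj; apply/eqP; rewrite eqEcard uv !jcard /=.
Qed.

Lemma jwalk2_cardsD u v : jwalk 2 u v -> #|val u :\: val v| <= 2.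
Proof.
move=> [s [size_s path_s <-]].
case: s size_s path_s => [|a [|b [|//]]] //= _ /and3P [ua ab _].
move: ua ab; rewrite !jadjE => /eqP ua /eqP ab.
by rewrite (leq_trans (cardsD_triangle _ (val a) _)) // ua ab.
Qed.

Lemma jdist2_cardsD u v : jdist_eq u v 2 -> #|val u :\: val v| = 2.
Proof.
move=> [/jwalk2_cardsD le2 shorter].
have n0 : #|val u :\: val v| != 0.
  apply/eqP => /jvert_eq_cardsD0 uv; apply: (shorter 0) => //.
  by exists [::]; split; rewrite //= uv.
have n1 : #|val u :\: val v| != 1.
  apply/eqP => uv; apply: (shorter 1) => //.
  by exists [:: v]; split; rewrite //= jadjE uv.
lia.
Qed.

Lemma common_jneighbour_majority {x y z} w :
  jdist_eq x y 2 -> jdist_eq y z 2 -> jdist_eq x z 2 ->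
  [set x; y; z] \subset jnbhd w -> val w = majority (val x) (val y) (val z).
Proof.
move=> /jdist2_cardsD xy /jdist2_cardsD yz /jdist2_cardsD xz /subsetP xyz_w.
have wN t : t \in [set x; y; z] -> #|val w :\: val t| = 1.
  by move/xyz_w; rewrite inE jadjE => /eqP.
by apply: common_neighbour_majority; rewrite ?jcard ?wN // !inE eqxx ?orbT.
Qed.

End JohnsonGraph.

Theorem mainTheorem6 (m k : nat) (A : {set jvert m k}) :
  k <= m -> shattered A -> 4 <= #|A| ->
  ~ (exists x y z : jvert m k,
       [/\ x \in A, y \in A & z \in A] /\
       [/\ jdist_eq x y 2, jdist_eq y z 2 & jdist_eq x z 2]).
Proof.
move=> _ shA cardA [x [y [z [[xA yA zA] [xy yz xz]]]]].
set S := [set x; y; z].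
have SA : S \subset A by rewrite !subUset !sub1set xA yA zA.
have /subsetPn [a aA aS] : ~~ (A \subset S).
  apply: contraL cardA => /subset_leq_card AS; rewrite -ltnNge ltnS.
  apply: leq_trans AS _; rewrite /S -setUA cardsU1 cards2.
  by case: (_ \notin _); case: (_ != _).
have [w1 N1] := shA S SA.
have [w2 N2] : exists w, A :&: jnbhd w = a |: S.
  by apply: shA; rewrite subUset sub1set aA SA.
have S_w1 : S \subset jnbhd w1 by rewrite -N1 subsetIr.
have S_w2 : S \subset jnbhd w2.
  by apply: subset_trans (subsetUr [set a] S) _; rewrite -N2 subsetIr.
have w12 : w1 = w2.
  apply: val_inj; rewrite (common_jneighbour_majority w1 xy yz xz S_w1).
  by rewrite (common_jneighbour_majority w2 xy yz xz S_w2).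
have : a \in A :&: jnbhd w1 by rewrite w12 N2 setU11.
by rewrite N1 (negbTE aS).
Qed.
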